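(* Let $(u_S,u_R)$ be an environment satisfying scant-indifferences. If a profile $(\sigma,\rho)$ is R-BR and $U_S(\sigma,\rho)$ equals the persuasion payoff, then $\rho$ is pure-on-path, i.e., $\rho(\cdot|m)$ is degenerate for every $m\in M_\sigma$.
   Context: $A=\{a_1,\dots,a_{|A|}\}$ and $\Omega$ are finite nonempty sets, $\mu_0$ a prior on $\Omega$ with $\mu_0(\omega)>0$ for all $\omega$, and $M$ a finite message set with $|M|>\max\{|\Omega|,|A|\}$. An environment is a pair of functions $u_S,u_R:A\times\Omega\to[0,1]$. A messaging strategy is $\sigma:\Omega\to\Delta M$; an action strategy is $\rho:M\to\Delta A$. $U_i(\sigma,\rho)=\sum_{\omega,m,a}\mu_0(\omega)\sigma(m|\omega)\rho(a|m)u_i(a,\omega)$. $(\sigma,\rho)$ is R-BR if $\rho\in\arg\max_{\rho'}U_R(\sigma,\rho')$. The persuasion payoff is the maximum of $U_S$ over R-BR profiles. $M_\sigma=\{m:\sigma(m|\omega)>0\text{ for some }\omega\}$. Scant-indifferences: with $\mathbf u_S(a)=u_S(a,\cdot)\in\mathbb R^{|\Omega|}$, $\mathbf u_R(a)=u_R(a,\cdot)$, for each $i$ the expanded-indifference matrix $T^i$ has $|\Omega|$ columns and rows $\mathbf u_S(a_j)-\mathbf u_S(a_i)$ ($j\ne i$), $\mathbf u_R(a_j)-\mathbf u_R(a_i)$ ($j\ne i$), and the rows of the $|\Omega|\times|\Omega|$ identity; the environment satisfies scant-indifferences if for each $i$ every matrix obtained from $T^i$ by deleting some rows has full rank. *)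

From HB Require Import structures.
From mathcomp Require Import all_boot all_order all_algebra.
From mathcomp Require Import reals.
Set Implicit Arguments. Unset Strict Implicit. Unset Printing Implicit Defensive.
Import Order.TTheory GRing.Theory Num.Theory.
Local Open Scope ring_scope.

Section Defs.
Variable R : realType.

Definition is_distr (T : finType) (p : T -> R) : Prop :=
  (forall t, 0 <= p t) /\ \sum_(t : T) p t = 1.

Definition degenerate (T : finType) (p : T -> R) : Prop :=
  exists t0 : T, forall t, p t = if t == t0 then 1 else 0.

Variables (A Omega M : finType).

(* messaging strategy sigma : Omega -> Delta M, sigma w m = sigma(m|w) *)
Definition messaging_strategy (sigma : Omega -> M -> R) : Prop :=
  forall w, is_distr (sigma w).

(* action strategy rho : M -> Delta A, rho m a = rho(a|m) *)
Definition action_strategy (rho : M -> A -> R) : Prop :=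
  forall m, is_distr (rho m).

Definition U (mu0 : Omega -> R) (u : A -> Omega -> R)
    (sigma : Omega -> M -> R) (rho : M -> A -> R) : R :=
  \sum_(w : Omega) \sum_(m : M) \sum_(a : A) mu0 w * sigma w m * rho m a * u a w.

Definition R_BR (mu0 : Omega -> R) (uR : A -> Omega -> R)
    (sigma : Omega -> M -> R) (rho : M -> A -> R) : Prop :=
  messaging_strategy sigma /\ action_strategy rho /\
  forall rho' : M -> A -> R, action_strategy rho' ->
    U mu0 uR sigma rho' <= U mu0 uR sigma rho.

(* U_S(sigma, rho) equals the persuasion payoff, i.e. the maximum of U_S over
   R-BR profiles (for an R-BR profile (sigma, rho), this says exactly that
   (sigma, rho) attains that maximum). *)
Definition attains_persuasion_payoff (mu0 : Omega -> R) (uS uR : A -> Omega -> R)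
    (sigma : Omega -> M -> R) (rho : M -> A -> R) : Prop :=
  forall sigma' rho', R_BR mu0 uR sigma' rho' ->
    U mu0 uS sigma' rho' <= U mu0 uS sigma rho.

Definition on_path (sigma : Omega -> M -> R) (m : M) : Prop :=
  exists w, 0 < sigma w m.

Definition pure_on_path (sigma : Omega -> M -> R) (rho : M -> A -> R) : Prop :=
  forall m, on_path sigma m -> degenerate (rho m).

(* Row indices of the expanded-indifference matrix T^i:
   inl (inl j) : row u_S(a_j) - u_S(a_i), j <> i
   inl (inr j) : row u_R(a_j) - u_R(a_i), j <> i
   inr w'      : row e_{w'} of the |Omega| x |Omega| identity *)
Definition T_index (i : A) : finType :=
  (({j : A | j != i} + {j : A | j != i}) + Omega)%type.

Definition T_row (uS uR : A -> Omega -> R) (i : A) (r : T_index i) : Omega -> R :=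
  match r with
  | inl (inl j) => fun w => uS (val j) w - uS i w
  | inl (inr j) => fun w => uR (val j) w - uR i w
  | inr w' => fun w => (w == w')%:R
  end.

Definition T_submx (uS uR : A -> Omega -> R) (i : A) (S : {set T_index i})
  : 'M[R]_(#|S|, #|Omega|) :=
  \matrix_(k < #|S|, l < #|Omega|) T_row uS uR (enum_val k) (enum_val l).

Definition scant_indifferences (uS uR : A -> Omega -> R) : Prop :=
  forall (i : A) (S : {set T_index i}),
    \rank (T_submx uS uR S) = minn #|S| #|Omega|.

End Defs.

From HB Require Import structures.
From mathcomp Require Import all_boot all_order all_algebra.
From mathcomp Require Import reals ring lra.
Set Implicit Arguments. Unset Strict Implicit. Unset Printing Implicit Defensive.
Import Order.TTheory GRing.Theory Num.Theory.
Local Open Scope ring_scope.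

(* Suppose rho mixes two actions a <> a' after an on-path message m of a
   sender-optimal profile.  Since |M| > |Omega|, the vectors sigma(m|.) of
   R^Omega are linearly dependent, and moving sigma along a dependency until
   a message drops out of use preserves R-BR and (by optimality, to first
   order) the sender's payoff; so we may assume some message m2 is unused.
   At an optimal profile every action in the support of rho(.|m) gives the
   sender the same payoff.  Scant-indifferences yields a direction d of joint
   weights, supported on the support of sigma(.|m), that keeps every action
   R-indifferent to a indifferent to it while changing the sender's payoff
   difference between a' and a.  Splitting m into m (recommending a') and m2
   (recommending a) along a small multiple of d then strictly increases the
   sender's payoff, contradicting optimality. *)

Section Distributions.
Variable R : realType.

Definition dirac (T : finType) (b : T) : T -> R := fun a => (a == b)%:R.

Lemma sum_dirac (T : finType) (b : T) (f : T -> R) :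
  \sum_a dirac b a * f a = f b.
Proof.
rewrite (bigD1 b) //= /dirac eqxx mul1r big1 ?addr0 // => a /negbTE ->.
by rewrite mul0r.
Qed.

Lemma dirac_distr (T : finType) (b : T) : is_distr (dirac b).
Proof.
split=> [t|]; first by rewrite /dirac; case: (t == b).
by have := sum_dirac b (fun=> 1); under eq_bigr do rewrite mulr1.
Qed.

Lemma distr_avg_le (T : finType) (q f : T -> R) c :
  is_distr q -> (forall b, f b <= c) -> \sum_b q b * f b <= c.
Proof.
move=> [q_ge0 q_sum] f_le; apply: le_trans (_ : \sum_b q b * c <= c).
  by apply: ler_sum => b _; apply: ler_wpM2l.
by rewrite -mulr_suml q_sum mul1r.
Qed.

Lemma distr_supp_eq_avg (T : finType) (p f : T -> R) :
  is_distr p -> (forall b, 0 < p b -> f b <= \sum_a p a * f a) ->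
  forall b, 0 < p b -> f b = \sum_a p a * f a.
Proof.
move=> [p_ge0 p_sum] f_le; set W := \sum_a p a * f a.
have gap_sum : \sum_a p a * (W - f a) = 0.
  under eq_bigr do rewrite mulrBr.
  by rewrite sumrB -mulr_suml p_sum mul1r subrr.
have gap_ge0 a : true -> 0 <= p a * (W - f a).
  move=> _; have := p_ge0 a; rewrite le_eqVlt => /orP[/eqP <-|pa].
    by rewrite mul0r.
  by rewrite mulr_ge0 ?subr_ge0 ?f_le // ltW.
move=> b pb; have /eqP := psumr_eq0P gap_ge0 gap_sum (i := b) isT.
by rewrite mulf_eq0 (gt_eqF pb) subr_eq0 => /eqP.
Qed.

Lemma distr_degenerate (T : finType) (p : T -> R) :
  is_distr p -> (forall a a', 0 < p a -> 0 < p a' -> a = a') -> degenerate p.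
Proof.
move=> [p_ge0 p_sum] supp_uniq.
have [a pa] : exists a, 0 < p a.
  case: (pickP (fun a => 0 < p a)) => [a pa|no_supp]; first by exists a.
  move: p_sum; rewrite big1 => [/eqP|a _]; first by rewrite eq_sym oner_eq0.
  by apply/eqP; rewrite eq_le p_ge0 andbT leNgt no_supp.
have p_eq0 t : t != a -> p t = 0.
  move=> ta; apply/eqP; rewrite eq_le p_ge0 andbT leNgt.
  by apply: contra ta => pt; rewrite (supp_uniq _ _ pt pa).
exists a => t; case: eqVneq => [->|/p_eq0 //].
by move: p_sum; rewrite (bigD1 a) //= big1 ?addr0 // => t /p_eq0.
Qed.

End Distributions.

Arguments dirac {R T} b.
Arguments dirac_distr {R T} b.

Lemma exists_small_step (R : realFieldType) (X : finType) (c e : X -> R) :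
  (forall x, 0 <= e x) -> (forall x, e x = 0 -> c x <= 0) ->
  exists2 tau, 0 < tau & forall x, tau * c x <= e x.
Proof.
move=> e_ge0 e0_c.
set S := \sum_x (`|c x| + 1) / e x.
have term_ge0 x : 0 <= (`|c x| + 1) / e x by rewrite divr_ge0 ?addr_ge0.
have S_ge0 : 0 <= S by apply: sumr_ge0 => x _.
exists (1 + S)^-1; first by rewrite invr_gt0; lra.
move=> x; have [ex|ex0] := ltrP 0 (e x); last first.
  have ex_eq0 : e x = 0 by apply/eqP; rewrite eq_le ex0 e_ge0.
  by rewrite ex_eq0 mulr_ge0_le0 ?e0_c // invr_ge0; lra.
have : (`|c x| + 1) / e x <= S.
  by rewrite /S (bigD1 x) //= lerDl; apply: sumr_ge0 => y _.
rewrite ler_pdivrMr // ler_pdivrMl; last lra.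
by have := ler_norm (c x); lra.
Qed.

Lemma sum_update2 (R : zmodType) (T : finType) (F G : T -> R) x1 x2 :
  x1 != x2 -> (forall x, x != x1 -> x != x2 -> F x = G x) ->
  \sum_x F x - \sum_x G x = (F x1 - G x1) + (F x2 - G x2).
Proof.
move=> x12 FG; rewrite -sumrB (bigD1 x1) //= (bigD1 x2) 1?eq_sym //=.
by rewrite big1 ?addr0 // => x /andP[x1x x2x]; rewrite FG ?subrr.
Qed.

Section LinearDependence.
Variable F : fieldType.

Lemma exists_lin_dependency (I J : finType) (v : I -> J -> F) :
  (#|J| < #|I|)%N ->
  exists2 c : I -> F, exists i, c i != 0 & forall j, \sum_i c i * v i j = 0.
Proof.
move=> ltJI.
pose X : 'M[F]_(#|I|, #|J|) := \matrix_(k, l) v (enum_val k) (enum_val l).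
have : kermx X != 0.
  by rewrite kermx_eq0 -row_leq_rank -ltnNge (leq_ltn_trans (rank_leq_col X)).
case/matrix0Pn => k [i Kki].
exists (fun i => kermx X k (enum_rank i)).
  by exists (enum_val i); rewrite enum_valK.
move=> j; have /matrixP/(_ k (enum_rank j)) := mulmx_ker X.
rewrite !mxE => kerX; rewrite -[RHS]kerX (reindex enum_rank) /=.
  by apply: eq_bigr => i' _; rewrite [X _ _]mxE !enum_rankK.
exact/onW_bij/enum_rank_bij.
Qed.

Lemma exists_kernel_separating k n (B : 'M[F]_(k, n)) (r : 'rV_n) :
  ~~ (r <= B)%MS -> exists2 v : 'cV_n, B *m v = 0 & r *m v != 0.
Proof.
rewrite submxE => /rV0Pn[l rKl].
exists (col l (cokermx B)); first by rewrite colE mulmxA mulmx_coker mul0mx.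
by apply/cV0Pn; exists 0; rewrite colE mulmxA -colE mxE.
Qed.

End LinearDependence.

Section ScantIndifferences.
Variables (R : realType) (A Omega : finType) (uS uR : A -> Omega -> R).

Definition coords (f : Omega -> R) : 'cV[R]_#|Omega| := \col_l f (enum_val l).

Definition T_rowv i (t : T_index Omega i) : 'rV[R]_#|Omega| :=
  \row_l T_row uS uR t (enum_val l).

Lemma coordsK (v : 'cV[R]_#|Omega|) : coords (fun w => v (enum_rank w) 0) = v.
Proof. by apply/matrixP => l j; rewrite ord1 mxE enum_valK. Qed.

Lemma T_rowv_coords i (t : T_index Omega i) f :
  (T_rowv t *m coords f) 0 0 = \sum_w T_row uS uR t w * f w.
Proof.
rewrite mxE [RHS](reindex (@enum_val Omega predT)) /=; last exact/onW_bij/enum_val_bij.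
by apply: eq_bigr => l _; rewrite !mxE.
Qed.

Lemma row_T_submx i (S : {set T_index Omega i}) k :
  row k (T_submx uS uR S) = T_rowv (enum_val k).
Proof. by apply/rowP => l; rewrite !mxE. Qed.

Lemma T_submx_coords i (S : {set T_index Omega i}) f k :
  (T_submx uS uR S *m coords f) k 0 = \sum_w T_row uS uR (enum_val k) w * f w.
Proof. by rewrite -T_rowv_coords -(row_T_submx k) -row_mul [RHS]mxE. Qed.

Lemma T_rowv_sub i (S : {set T_index Omega i}) t :
  t \in S -> (T_rowv t <= T_submx uS uR S)%MS.
Proof. by move=> tS; rewrite -(enum_rankK_in tS tS) -row_T_submx row_sub. Qed.

Lemma T_submx_sub i (S : {set T_index Omega i}) m (B : 'M_(m, #|Omega|)) :
  (forall t, t \in S -> (T_rowv t <= B)%MS) -> (T_submx uS uR S <= B)%MS.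
Proof. by move=> rowsB; apply/row_subP => k; rewrite row_T_submx rowsB ?enum_valP. Qed.

(* A nonzero beta orthogonal to the rows in S shows that they do not span;
   scant-indifferences then forces every further row out of their span. *)
Lemma scant_separating_direction i (S : {set T_index Omega i}) t (beta : Omega -> R) :
  scant_indifferences uS uR -> t \notin S -> (exists w, beta w != 0) ->
  (forall t', t' \in S -> \sum_w T_row uS uR t' w * beta w = 0) ->
  exists2 d : Omega -> R,
    forall t', t' \in S -> \sum_w T_row uS uR t' w * d w = 0 &
    \sum_w T_row uS uR t w * d w != 0.
Proof.
move=> scant tS [w0 beta_w0] beta_perp; set B := T_submx uS uR S.
have B_beta : B *m coords beta = 0.
  by apply/matrixP => k j; rewrite ord1 [RHS]mxE T_submx_coords beta_perp ?enum_valP.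
have ltSO : (#|S| < #|Omega|)%N.
  rewrite ltnNge; apply/negP => leOS.
  have /row_full_inj/(_ (coords beta) 0) : row_full B.
    by rewrite -col_leq_rank /B scant leq_min leOS leqnn.
  rewrite B_beta mulmx0 => /(_ erefl)/matrixP/(_ (enum_rank w0) 0).
  by rewrite !mxE enum_rankK => /eqP; rewrite (negbTE beta_w0).
have t_notin : ~~ (T_rowv t <= B)%MS.
  apply/negP => tB.
  have /mxrankS : (T_submx uS uR (t |: S) <= B)%MS.
    by apply: T_submx_sub => t'; rewrite in_setU1 => /predU1P[->|/T_rowv_sub].
  rewrite !scant cardsU1 tS add1n (minn_idPl ltSO) (minn_idPl (ltnW ltSO)).
  by rewrite ltnn.
have [v Bv tv] := exists_kernel_separating t_notin.
exists (fun w => v (enum_rank w) 0) => [t' t'S|].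
  by rewrite -(enum_rankK_in t'S t'S) -T_submx_coords coordsK Bv mxE.
rewrite -T_rowv_coords coordsK; apply: contraNneq tv => tv0.
by apply/eqP/matrixP => k l; rewrite !ord1 tv0 mxE.
Qed.

Lemma scant_indifference_direction (a a' : A) (B : pred A) (Z : pred Omega)
    (beta : Omega -> R) :
  scant_indifferences uS uR -> a' != a -> (exists w, beta w != 0) ->
  (forall w, Z w -> beta w = 0) ->
  (forall b, B b -> \sum_w (uR b w - uR a w) * beta w = 0) ->
  exists d : Omega -> R, [/\ forall w, Z w -> d w = 0,
    forall b, B b -> \sum_w (uR b w - uR a w) * d w = 0 &
    \sum_w (uS a' w - uS a w) * d w != 0].
Proof.
move=> scant a'a beta_nz betaZ betaB.
pose S : {set T_index Omega a} := [set t | match t with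
  | inl (inr j) => B (val j) | inr w => Z w | _ => false end].
pose t : T_index Omega a := inl (inl (exist _ a' a'a)).
have tS : t \notin S by rewrite inE.
have beta_perp t' : t' \in S -> \sum_w T_row uS uR t' w * beta w = 0.
  rewrite inE; case: t' => [[//|j]|w] /= jS; first exact: betaB.
  by rewrite (sum_dirac w beta) betaZ.
have [d dS dS'] := scant_separating_direction scant tS beta_nz beta_perp.
exists d; split=> // [w Zw|b Bb].
  by have := dS (inr w); rewrite inE /= (sum_dirac w d) => ->.
have [->|ba] := eqVneq b a; first by rewrite big1 // => w _; rewrite subrr mul0r.
by apply: (dS (inl (inr (exist _ b ba)))); rewrite inE.
Qed.

End ScantIndifferences.

Section Game.
Variables (R : realType) (A Omega M : finType) (mu0 : Omega -> R).

(* Unnormalised: Pr[m] times the expected payoff of b given m. *)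
Definition msg_payoff (u : A -> Omega -> R) (s : Omega -> M -> R) m b : R :=
  \sum_w mu0 w * s w m * u b w.

Definition msg_best_response (uR : A -> Omega -> R) s (r : M -> A -> R) : Prop :=
  forall m (q : A -> R), is_distr q ->
    \sum_a q a * msg_payoff uR s m a <= \sum_a r m a * msg_payoff uR s m a.

Lemma U_msg_payoff u s r : U mu0 u s r = \sum_m \sum_a r m a * msg_payoff u s m a.
Proof.
rewrite /U exchange_big; apply: eq_bigr => m _.
rewrite exchange_big; apply: eq_bigr => a _.
by rewrite /msg_payoff mulr_sumr; apply: eq_bigr => w _; ring.
Qed.

Lemma U_set_msg u s r m q :
  U mu0 u s (fun m' => if m' == m then q else r m') =
  U mu0 u s r + (\sum_a q a * msg_payoff u s m a - \sum_a r m a * msg_payoff u s m a).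
Proof.
rewrite !U_msg_payoff (bigD1 m) //= [in RHS](bigD1 m) //= eqxx.
have -> : \sum_(m' | m' != m) \sum_a (if m' == m then q else r m') a *
                                        msg_payoff u s m' a
        = \sum_(m' | m' != m) \sum_a r m' a * msg_payoff u s m' a.
  by apply: eq_bigr => m' /negbTE ->.
ring.
Qed.

Lemma R_BR_msgP uR s r :
  R_BR mu0 uR s r <->
  [/\ messaging_strategy s, action_strategy r & msg_best_response uR s r].
Proof.
split=> [[Hs [Hr opt]]|[Hs Hr opt]]; last first.
  split=> //; split=> // r' Hr'; rewrite !U_msg_payoff.
  by apply: ler_sum => m _; apply: opt.
split=> // m q Hq.
have Hr' : action_strategy (fun m' => if m' == m then q else r m').
  by move=> m'; case: eqP.
by have := opt _ Hr'; rewrite U_set_msg gerDl subr_le0.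
Qed.

Lemma R_BR_supp_max uR s r m b :
  R_BR mu0 uR s r -> 0 < r m b ->
  forall b', msg_payoff uR s m b' <= msg_payoff uR s m b.
Proof.
case/R_BR_msgP => _ Hr opt rb b'.
have avg_ge b0 : msg_payoff uR s m b0 <= \sum_a r m a * msg_payoff uR s m a.
  by have := opt m _ (dirac_distr b0); rewrite sum_dirac.
by rewrite (distr_supp_eq_avg (Hr m) (fun b _ => avg_ge b) rb).
Qed.

Lemma R_BR_set_dirac uR s r m b :
  R_BR mu0 uR s r -> (forall b', msg_payoff uR s m b' <= msg_payoff uR s m b) ->
  R_BR mu0 uR s (fun m' => if m' == m then dirac b else r m').
Proof.
case/R_BR_msgP => Hs Hr opt b_max; apply/R_BR_msgP; split=> // [m'|m' q Hq].
  by case: eqP => _; [apply: dirac_distr | apply: Hr].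
case: eqP => [->|_]; last exact: opt.
by rewrite sum_dirac; apply: distr_avg_le.
Qed.

(* Otherwise recommending that action with certainty would be better. *)
Lemma optimal_supp_payoff uS uR s r m b :
  R_BR mu0 uR s r -> attains_persuasion_payoff mu0 uS uR s r -> 0 < r m b ->
  msg_payoff uS s m b = \sum_a r m a * msg_payoff uS s m a.
Proof.
move=> HBR Hatt; have [_ Hr _] := (R_BR_msgP uR s r).1 HBR.
apply: (distr_supp_eq_avg (Hr m)) => b' rb'; rewrite leNgt; apply/negP => gain.
have := Hatt _ _ (R_BR_set_dirac HBR (R_BR_supp_max HBR rb')).
by rewrite U_set_msg sum_dirac gerDl subr_le0 leNgt gain.
Qed.

Definition scale_msg (c : M -> R) (t : R) (s : Omega -> M -> R) : Omega -> M -> R :=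
  fun w m => (1 + t * c m) * s w m.

Lemma msg_payoff_scale u c t s m b :
  msg_payoff u (scale_msg c t s) m b = (1 + t * c m) * msg_payoff u s m b.
Proof.
by rewrite /msg_payoff mulr_sumr; apply: eq_bigr => w _; rewrite /scale_msg; ring.
Qed.

Lemma U_scale (u : A -> Omega -> R) c t s r :
  U mu0 u (scale_msg c t s) r =
  U mu0 u s r + t * \sum_m c m * \sum_a r m a * msg_payoff u s m a.
Proof.
rewrite !U_msg_payoff mulr_sumr -big_split; apply: eq_bigr => m _ /=.
rewrite [in RHS]mulr_sumr [in RHS]mulr_sumr -big_split; apply: eq_bigr => a _ /=.
by rewrite msg_payoff_scale; ring.
Qed.

Lemma R_BR_scale (uR : A -> Omega -> R) c t s r :
  R_BR mu0 uR s r -> (forall w, \sum_m c m * s w m = 0) ->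
  (forall m, 0 <= 1 + t * c m) -> R_BR mu0 uR (scale_msg c t s) r.
Proof.
case/R_BR_msgP => Hs Hr opt dep c_ge; apply/R_BR_msgP; split=> // [w|m q Hq].
  split=> [m|]; first by rewrite mulr_ge0 // (Hs w).1.
  have -> : \sum_m scale_msg c t s w m = \sum_m s w m + t * \sum_m c m * s w m.
    by rewrite mulr_sumr -big_split; apply: eq_bigr => m _; rewrite /scale_msg /=; ring.
  by rewrite dep mulr0 addr0 (Hs w).2.
have scaled p : \sum_a p a * msg_payoff uR (scale_msg c t s) m a =
                (1 + t * c m) * \sum_a p a * msg_payoff uR s m a.
  by rewrite mulr_sumr; apply: eq_bigr => a _; rewrite msg_payoff_scale mulrCA.
by rewrite !scaled ler_wpM2l ?c_ge ?opt.
Qed.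

Lemma dependency_has_pos (s : Omega -> M -> R) c w0 m :
  messaging_strategy s -> 0 < s w0 m -> (forall w, \sum_m' c m' * s w m' = 0) ->
  c m < 0 -> exists m', 0 < c m'.
Proof.
move=> Hs sm dep cm; case: (pickP (fun m' => 0 < c m')) => [m' cm'|c_le0].
  by exists m'.
have := dep w0; rewrite (bigD1 m) //=.
have : \sum_(m' | m' != m) c m' * s w0 m' <= 0.
  by apply: sumr_le0 => m' _; rewrite mulr_le0_ge0 ?(Hs w0).1 // leNgt c_le0.
have : c m * s w0 m < 0 by rewrite pmulr_llt0.
lra.
Qed.

Lemma exists_signed_dependency (s : Omega -> M -> R) w0 m :
  (#|Omega| < #|M|)%N -> messaging_strategy s -> 0 < s w0 m ->
  exists c : M -> R,
    [/\ forall w, \sum_m' c m' * s w m' = 0, c m <= 0 & exists m', 0 < c m'].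
Proof.
move=> ltOM Hs sm.
have [c [m1 cm1] dep] := exists_lin_dependency (fun m' w => s w m') ltOM.
have depN w : \sum_m' - c m' * s w m' = 0.
  by under eq_bigr do rewrite mulNr; rewrite sumrN dep oppr0.
have [cm|cm|cm] := ltgtP (c m) 0.
- by exists c; split; [| exact: ltW | exact: dependency_has_pos Hs sm dep cm].
- exists (fun m' => - c m'); split; [by [] | by rewrite oppr_le0 ltW |].
  by apply: dependency_has_pos Hs sm depN _; rewrite oppr_lt0.
have [cm1'|cm1'|/eqP] := ltgtP (c m1) 0; last by rewrite (negbTE cm1).
- exists (fun m' => - c m'); split=> //; first by rewrite cm oppr0.
  by exists m1; rewrite oppr_gt0.
- by exists c; split; [| rewrite cm | exists m1].
Qed.

(* Moving sigma along a dependency c is linear in the step t; optimality rules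
   out a gain for small t > 0, so the step that makes the message maximizing c
   unused loses nothing. *)
Lemma optimal_free_msg (uS uR : A -> Omega -> R) (s : Omega -> M -> R) r m :
  (#|Omega| < #|M|)%N -> R_BR mu0 uR s r ->
  attains_persuasion_payoff mu0 uS uR s r -> on_path s m ->
  exists s' m2, [/\ R_BR mu0 uR s' r, attains_persuasion_payoff mu0 uS uR s' r,
    m2 != m, forall w, s' w m2 = 0 & on_path s' m].
Proof.
move=> ltOM HBR Hatt [w0 sm]; have [Hs _ _] := (R_BR_msgP uR s r).1 HBR.
have [c [dep cm [m3 cm3]]] := exists_signed_dependency ltOM Hs sm.
have [m2 _ c_max] := @arg_maxP _ _ M m3 predT c isT.
have cm2 : 0 < c m2 := lt_le_trans cm3 (c_max m3 isT).
pose gain := \sum_m' c m' * \sum_a r m' a * msg_payoff uS s m' a.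
have gain_le0 : gain <= 0.
  have one_ne0 m' : (1 : R) = 0 -> - c m' <= 0 by move/eqP; rewrite oner_eq0.
  have [eps eps_gt0 eps_small] := exists_small_step (fun=> ler01) one_ne0.
  have feasible m' : 0 <= 1 + eps * c m' by have := eps_small m'; rewrite mulrN; lra.
  have := Hatt _ _ (R_BR_scale HBR dep feasible).
  by rewrite U_scale -/gain gerDl pmulr_rle0.
pose t := - (c m2)^-1.
have t_c m' : t * c m' = - (c m' / c m2) by rewrite /t mulNr mulrC.
have feasible m' : 0 <= 1 + t * c m'.
  by rewrite t_c subr_ge0 ler_pdivrMr // mul1r; apply: c_max.
exists (scale_msg c t s), m2; split.
- exact: R_BR_scale.
- move=> s' r' HBR'; rewrite U_scale -/gain; apply: le_trans (Hatt _ _ HBR') _.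
  by rewrite lerDl mulr_le0 // oppr_le0 invr_ge0 ltW.
- by apply: contraTneq cm => <-; rewrite -ltNge.
- by move=> w; rewrite /scale_msg t_c divff ?gt_eqF // subrr mul0r.
- exists w0; rewrite /scale_msg mulr_gt0 // t_c subr_gt0.
  by rewrite ltr_pdivrMr // mul1r (le_lt_trans cm).
Qed.

Section Splitting.
Hypothesis mu0_pos : forall w, 0 < mu0 w.

(* Message m is split into m and the unused message m2, whose joint weights
   with the states are mu0 sigma(m|.) / 2 + y and mu0 sigma(m|.) / 2 - y. *)
Definition split_msg (m m2 : M) (y : Omega -> R) (s : Omega -> M -> R) :
    Omega -> M -> R :=
  fun w m' => if m' == m then s w m / 2 + y w / mu0 w
              else if m' == m2 then s w m / 2 - y w / mu0 w else s w m'.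

Definition split_act (m m2 : M) (a' a : A) (r : M -> A -> R) : M -> A -> R :=
  fun m' => if m' == m then dirac a' else if m' == m2 then dirac a else r m'.

Lemma msg_payoff_split_l (u : A -> Omega -> R) m m2 y s b :
  msg_payoff u (split_msg m m2 y s) m b =
  msg_payoff u s m b / 2 + \sum_w y w * u b w.
Proof.
rewrite /msg_payoff mulr_suml -big_split; apply: eq_bigr => w _ /=.
by rewrite /split_msg eqxx; field; rewrite gt_eqF.
Qed.

Lemma msg_payoff_split_r (u : A -> Omega -> R) m m2 y s b : m2 != m ->
  msg_payoff u (split_msg m m2 y s) m2 b =
  msg_payoff u s m b / 2 - \sum_w y w * u b w.
Proof.
move=> m2m; rewrite /msg_payoff mulr_suml -sumrB; apply: eq_bigr => w _ /=.
by rewrite /split_msg (negbTE m2m) eqxx; field; rewrite gt_eqF.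
Qed.

Lemma split_msg_strategy m m2 y (s : Omega -> M -> R) :
  messaging_strategy s -> m2 != m -> (forall w, s w m2 = 0) ->
  (forall w, `|y w / mu0 w| <= s w m / 2) ->
  messaging_strategy (split_msg m m2 y s).
Proof.
move=> Hs m2m unused y_small w.
have := y_small w; rewrite ler_norml => /andP[y_ge y_le].
split=> [m'|].
  rewrite /split_msg; case: eqP => _; first lra.
  by case: eqP => _; [lra | apply: (Hs w).1].
apply/eqP; rewrite -subr_eq0 -(Hs w).2 (sum_update2 (x1 := m) (x2 := m2)) 1?eq_sym //.
  by rewrite /split_msg eqxx (negbTE m2m) eqxx unused; apply/eqP; lra.
by move=> m' /negbTE m'm /negbTE m'm2; rewrite /split_msg m'm m'm2.
Qed.

Lemma U_split (u : A -> Omega -> R) m m2 y s r a' a :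
  m2 != m -> (forall w, s w m2 = 0) ->
  U mu0 u (split_msg m m2 y s) (split_act m m2 a' a r) - U mu0 u s r =
  (msg_payoff u s m a' + msg_payoff u s m a) / 2
    - \sum_b r m b * msg_payoff u s m b
    + (\sum_w y w * u a' w - \sum_w y w * u a w).
Proof.
move=> m2m unused.
rewrite !U_msg_payoff (sum_update2 (x1 := m) (x2 := m2)) 1?eq_sym //; last first.
  move=> m' /negbTE m'm /negbTE m'm2.
  by rewrite /split_act /msg_payoff /split_msg m'm m'm2.
rewrite /split_act eqxx (negbTE m2m) eqxx !sum_dirac.
rewrite msg_payoff_split_l msg_payoff_split_r //.
have -> : \sum_b r m2 b * msg_payoff u s m2 b = 0.
  rewrite big1 // => b _; rewrite /msg_payoff big1 ?mulr0 // => w _.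
  by rewrite unused mulr0 mul0r.
lra.
Qed.

Lemma R_BR_split (uR : A -> Omega -> R) m m2 y s r a' a :
  R_BR mu0 uR s r -> m2 != m -> (forall w, s w m2 = 0) ->
  (forall w, `|y w / mu0 w| <= s w m / 2) ->
  msg_payoff uR s m a' = msg_payoff uR s m a ->
  (forall b, `|\sum_w y w * uR b w - \sum_w y w * uR a w|
               <= (msg_payoff uR s m a - msg_payoff uR s m b) / 2) ->
  R_BR mu0 uR (split_msg m m2 y s) (split_act m m2 a' a r).
Proof.
case/R_BR_msgP => Hs Hr opt m2m unused y_small VRa' y_bound.
have D_a' : \sum_w y w * uR a' w = \sum_w y w * uR a w.
  apply/eqP; rewrite -subr_eq0 -normr_eq0 eq_le normr_ge0 andbT.
  by have := y_bound a'; rewrite VRa' subrr mul0r.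
apply/R_BR_msgP; split; first exact: split_msg_strategy.
  move=> m'; rewrite /split_act; case: eqP => _; first exact: dirac_distr.
  by case: eqP => _; [exact: dirac_distr | exact: Hr].
move=> m' q Hq; rewrite /split_act; case: eqVneq => [->|m'm] /=.
  rewrite sum_dirac; apply: distr_avg_le Hq _ => b.
  rewrite !msg_payoff_split_l.
  by have := y_bound b; rewrite ler_norml => /andP[]; lra.
case: eqVneq => [->|m'm2] /=.
  rewrite sum_dirac; apply: distr_avg_le Hq _ => b.
  rewrite !msg_payoff_split_r //.
  by have := y_bound b; rewrite ler_norml => /andP[]; lra.
by rewrite /msg_payoff /split_msg (negbTE m'm) (negbTE m'm2); apply: opt.
Qed.

(* A small multiple y = tau G d of the scant-indifferences direction keeps a'
   and a receiver-optimal after the two halves, and the sender gains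
   tau G^2 > 0. *)
Lemma optimal_supp_singleton (uS uR : A -> Omega -> R) (s : Omega -> M -> R)
    r m m2 a a' :
  scant_indifferences uS uR -> R_BR mu0 uR s r ->
  attains_persuasion_payoff mu0 uS uR s r ->
  m2 != m -> (forall w, s w m2 = 0) -> on_path s m ->
  0 < r m a -> 0 < r m a' -> a' = a.
Proof.
move=> scant HBR Hatt m2m unused [w0 sm] ra ra'.
have [//|a'a] := eqVneq a' a; exfalso.
have [Hs _ _] := (R_BR_msgP uR s r).1 HBR.
have VR_le b : msg_payoff uR s m b <= msg_payoff uR s m a := R_BR_supp_max HBR ra b.
have VRa' : msg_payoff uR s m a' = msg_payoff uR s m a.
  by apply/eqP; rewrite eq_le VR_le (R_BR_supp_max HBR ra').
have beta_nz : exists w, mu0 w * s w m != 0 by exists w0; rewrite mulf_neq0 ?gt_eqF.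
have betaZ w : s w m == 0 -> mu0 w * s w m = 0 by move/eqP->; rewrite mulr0.
have betaB b : msg_payoff uR s m b == msg_payoff uR s m a ->
    \sum_w (uR b w - uR a w) * (mu0 w * s w m) = 0.
  move/eqP => VRb; rewrite -[RHS](subrr (msg_payoff uR s m a)) -{1}VRb.
  by rewrite /msg_payoff -sumrB; apply: eq_bigr => w _; ring.
have [d [dZ dB dS]] := scant_indifference_direction
  (B := fun b => msg_payoff uR s m b == msg_payoff uR s m a)
  (Z := fun w => s w m == 0) scant a'a beta_nz betaZ betaB.
set G := \sum_w (uS a' w - uS a w) * d w in dS.
pose c x := match x with
  | inl w => `|G * d w / mu0 w|
  | inr b => `|G * \sum_w (uR b w - uR a w) * d w| end.
pose e x := match x with
  | inl w => s w m / 2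
  | inr b => (msg_payoff uR s m a - msg_payoff uR s m b) / 2 end.
have e_ge0 x : 0 <= e x.
  by case: x => [w|b] /=; rewrite divr_ge0 // ?(Hs w).1 // subr_ge0.
have e0_c x : e x = 0 -> c x <= 0.
  case: x => [w|b] /= ex0.
    by rewrite dZ /= ?mulr0 ?mul0r ?normr0 //; apply/eqP; lra.
  by rewrite dB /= ?mulr0 ?normr0 //; apply/eqP; lra.
have [tau tau_gt0 tau_small] := exists_small_step e_ge0 e0_c.
pose y w := tau * G * d w.
have y_diff (u : A -> Omega -> R) b b' :
    \sum_w y w * u b w - \sum_w y w * u b' w = tau * G * \sum_w (u b w - u b' w) * d w.
  by rewrite -sumrB mulr_sumr; apply: eq_bigr => w _; rewrite /y; ring.
have y_small w : `|y w / mu0 w| <= s w m / 2.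
  have -> : y w / mu0 w = tau * (G * d w / mu0 w) by rewrite /y; ring.
  by rewrite normrM gtr0_norm //; apply: (tau_small (inl w)).
have y_bound b : `|\sum_w y w * uR b w - \sum_w y w * uR a w|
                   <= (msg_payoff uR s m a - msg_payoff uR s m b) / 2.
  by rewrite y_diff -mulrA normrM gtr0_norm //; apply: (tau_small (inr b)).
have := Hatt _ _ (R_BR_split HBR m2m unused y_small VRa' y_bound).
rewrite -subr_le0 U_split // y_diff -/G (optimal_supp_payoff HBR Hatt ra').
rewrite -(optimal_supp_payoff HBR Hatt ra).
have : 0 < tau * G * G by rewrite -mulrA mulr_gt0 // lt0r mulf_neq0 // -expr2 sqr_ge0.
lra.
Qed.

End Splitting.

End Game.

Unset Implicit Arguments.

Theorem lemma4 (R : realType) (A Omega M : finType)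
  (mu0 : Omega -> R) (uS uR : A -> Omega -> R)
  (sigma : Omega -> M -> R) (rho : M -> A -> R) :
  (0 < #|A|)%N -> (0 < #|Omega|)%N ->
  (maxn #|Omega| #|A| < #|M|)%N ->
  (forall w, 0 < mu0 w) -> \sum_(w : Omega) mu0 w = 1 ->
  (forall a w, 0 <= uS a w <= 1) -> (forall a w, 0 <= uR a w <= 1) ->
  scant_indifferences uS uR ->
  R_BR mu0 uR sigma rho ->
  attains_persuasion_payoff mu0 uS uR sigma rho ->
  pure_on_path sigma rho.
Proof.
move=> _ _ ltM mu0_pos _ _ _ scant HBR Hatt m on_m.
have ltOM : (#|Omega| < #|M|)%N by move: ltM; rewrite gtn_max => /andP[].
have [s' [m2 [HBR' Hatt' m2m unused on_m']]] := optimal_free_msg ltOM HBR Hatt on_m.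
have [_ Hr _] := (R_BR_msgP mu0 uR sigma rho).1 HBR.
apply: distr_degenerate (Hr m) _ => a a' ra ra'.
exact: (optimal_supp_singleton mu0_pos scant HBR' Hatt' m2m unused on_m' ra' ra).
Qed.
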